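(* Let $\prec$ be a monomial order on $\langle x,x^*\rangle$ and let $I\subseteq\mathbb F\langle x,x^*\rangle$ be a $*$-ideal generated (as a $*$-ideal) by some nonzero analytic polynomials. Then the reduced Gröbner basis of $I$ with respect to $\prec$ is of the form $G\cup H^*$, where $G$ and $H$ consist entirely of analytic polynomials (and $H^*=\{h^*:h\in H\}$).
   Context: $\mathbb F\in\{\mathbb R,\mathbb C\}$. $\langle x,x^*\rangle$ is the free monoid of words in the letters $x_1,\dots,x_g,x_1^*,\dots,x_g^*$, and $\mathbb F\langle x,x^*\rangle$ the free $*$-algebra of polynomials in these letters (involution conjugates coefficients, reverses words, swaps $x_j\leftrightarrow x_j^*$). A polynomial is analytic if it contains no letter $x_j^*$. A $*$-ideal is a two-sided ideal with $I^*=I$. A monomial order is a total order $\prec$ on $\langle x,x^*\rangle$ that is a well-ordering and satisfies $a\prec b\Rightarrow ca\prec cb$ and $ac\prec bc$ for all words $c$. For nonzero $p=\sum_{i=1}^s c_it_i$ with $c_i\ne0$ and words $t_1\succ\dots\succ t_s$, $T(p)=t_1$ is the leading monomial and $c_1$ the leading coefficient; $p$ is monic if $c_1=1$. A word $a$ divides $b$ if $b=cad$ for words $c,d$. A reduced Gröbner basis of a two-sided ideal $I$ is a set $G\subseteq I$ such that: for each nonzero $f\in I$ some $g\in G$ has $T(g)$ dividing $T(f)$; every element of $G$ is monic; and for distinct $g_1,g_2\in G$, $T(g_1)$ divides no word appearing in $g_2$. Every two-sided ideal has a unique reduced Gröbner basis. *)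

(* Free *-algebra F<x,x*> in g variables, with polynomials
   represented as finitely supported coefficient functions on words. *)
From HB Require Import structures.
From mathcomp Require Import all_boot all_order all_algebra.
Set Implicit Arguments. Unset Strict Implicit. Unset Printing Implicit Defensive.
Import Order.TTheory GRing.Theory Num.Theory.
Local Open Scope ring_scope.

(* A letter is x_j (false) or x_j^* (true), j : 'I_g. *)
Definition letter (g : nat) := ('I_g * bool)%type.
Definition word (g : nat) := seq (letter g).

Definition wstar (g : nat) (w : word g) : word g :=
  rev (map (fun l : letter g => (l.1, ~~ l.2)) w).

Definition wdivides (g : nat) (a b : word g) : Prop :=
  exists c d : word g, b = c ++ a ++ d.

Definition monomial_order (g : nat) (lt : word g -> word g -> Prop) : Prop :=
  [/\ (forall a, ~ lt a a),
      (forall a b c, lt a b -> lt b c -> lt a c),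
      (forall a b, a <> b -> lt a b \/ lt b a),
      well_founded lt &
      (forall a b c, lt a b -> lt (c ++ a) (c ++ b) /\ lt (a ++ c) (b ++ c))].

Section Poly.
Variables (g : nat) (F : fieldType) (conj : F -> F).

Definition pol := word g -> F.
Definition finsupp (p : pol) : Prop :=
  exists s : seq (word g), forall w, p w != 0 -> w \in s.

Definition pzero : pol := fun _ => 0.
Definition padd (p q : pol) : pol := fun w => p w + q w.
Definition pmul (p q : pol) : pol :=
  fun w => \sum_(i < (size w).+1) p (take i w) * q (drop i w).
Definition pstar (p : pol) : pol := fun w => conj (p (wstar w)).

Definition analytic (p : pol) : Prop :=
  forall w, p w != 0 -> all (fun l : letter g => ~~ l.2) w.

Definition star_ideal (S : pol -> Prop) : Prop :=
  [/\ (forall p, S p -> finsupp p),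
      S pzero,
      (forall p q, S p -> S q -> S (padd p q)),
      (forall p q, S p -> finsupp q -> S (pmul q p) /\ S (pmul p q)) &
      (forall p, S p -> S (pstar p))].

Definition star_ideal_gen (A : pol -> Prop) : pol -> Prop :=
  fun p => forall S, star_ideal S -> (forall a, A a -> S a) -> S p.

Variable lt : word g -> word g -> Prop.

Definition lead_mon (p : pol) (t : word g) : Prop :=
  p t != 0 /\ forall w, p w != 0 -> w <> t -> lt w t.

Definition monic (p : pol) : Prop := exists t, lead_mon p t /\ p t = 1.

Definition reduced_groebner (I B : pol -> Prop) : Prop :=
  [/\ (forall b, B b -> I b),
      (forall f, I f -> f <> pzero ->
         exists b, B b /\ exists tb tf,
           [/\ lead_mon b tb, lead_mon f tf & wdivides tb tf]),
      (forall b, B b -> monic b) &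
      (forall b1 b2, B b1 -> B b2 -> b1 <> b2 ->
         forall t1, lead_mon b1 t1 -> forall w, b2 w != 0 -> ~ wdivides t1 w)].

End Poly.

From Pilot Require Import Defs.
From HB Require Import structures.
From mathcomp Require Import all_boot all_order all_algebra.
From mathcomp Require Import finmap zify.
From mathcomp.multinomials Require Import monalg.
From Stdlib Require Import ClassicalEpsilon FunctionalExtensionality Classical.
Import Defs.
Import GRing.Theory.
Local Open Scope ring_scope.
Set Implicit Arguments. Unset Strict Implicit. Unset Printing Implicit Defensive.

(* Proof of Proposition 4.1: in the reduced Groebner basis of a *-ideal I
   generated by analytic polynomials, every element is "pure", i.e. all
   words of its support consist only of letters x_j, or only of letters x_j^*.
   The analytic elements then form G, and the pure-star elements are H^*.

   Call a polynomial b-pure if its words only use letters with star flag b.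
   A word is standard if it is not divisible by the leading monomial of any
   nonzero pure element of I.  We show:
   - every b-pure polynomial is congruent modulo I to a unique b-pure
     standard polynomial, its normal form (division by pure elements of I);
   - the span of the standard words carries a left action of F<x,x*>:
     a letter of flag b acts on a standard word s by multiplying the maximal
     b-pure prefix of s and taking the b-normal form;
   - every pure element of I annihilates this module; the polynomials p such
     that p and p^* annihilate it form a *-ideal containing A, hence all of I
     annihilates the module;
   - for a basis element b0 with leading word t, the tail of b0 is standard
     and t is a pure leading word (reducedness); acting on the empty word
     gives t's normal form plus the (standard) tail of b0, which must vanish,
     so the tail equals minus a normal form and b0 is pure. *)

Lemma cat_eq_nil (g : nat) (x y : word g) : x ++ y = [::] -> x = [::] /\ y = [::].
Proof. by case: x => //; case: y. Qed.

HB.instance Definition _ g := Choice.on (word g).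
HB.instance Definition _ g :=
  Choice_isMonomialDef.Build (word g) (@catA _) (@cat0s _) (@cats0 _) (@cat_eq_nil g).

Lemma sum_pred1 (T : eqType) (V : zmodType) (s : seq T) (f : T -> V) d :
  uniq s -> \sum_(k <- s) f k *+ (k == d) = f d *+ (d \in s).
Proof.
elim: s => [|x s IH] /=; first by rewrite big_nil.
case/andP=> xs us; rewrite big_cons IH // in_cons.
have [<-|_] := eqVneq x d; last exact: add0r.
by rewrite (negbTE xs); exact: addr0.
Qed.

Lemma sum_neq0 (I0 : eqType) (F : zmodType) (r : seq I0) (f : I0 -> F) :
  \sum_(i <- r) f i != 0 -> exists2 i, i \in r & f i != 0.
Proof.
elim: r => [|x r IH]; first by rewrite big_nil eqxx.
rewrite big_cons; have [->|fx] := eqVneq (f x) 0; last by exists x; rewrite ?mem_head.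
by rewrite add0r => /IH [i ir fi]; exists i; rewrite ?in_cons ?ir ?orbT.
Qed.

Section MonoidAlgebra.
Variables (g : nat) (F : fieldType).
Notation alg := {malg F[word g]}.

Definition pol_of (P : alg) : pol g F := fun w => P@_w.

Lemma pol_of_inj : injective pol_of.
Proof. by move=> P Q e; apply/malgP => k; exact: (equal_f e k). Qed.

Lemma pol_of_finsupp P : finsupp (pol_of P).
Proof. by exists (msupp P) => w; rewrite /pol_of mcoeff_neq0. Qed.

Lemma pol_of_surj (p : pol g F) : finsupp p -> exists P, pol_of P = p.
Proof.
case=> s Hs; exists (\sum_(w <- undup s) << p w *g w >>).
apply: functional_extensionality => k; rewrite /pol_of raddf_sum /=.
under eq_bigr do rewrite mcoeffU.
rewrite sum_pred1 ?undup_uniq // mem_undup.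
case: (boolP (k \in s)) => // ks.
suff -> : p k = 0 by [].
by apply/eqP; apply: contraNT ks; exact: Hs.
Qed.

Lemma sum_msupp (P : alg) d : \sum_(k <- msupp P) P@_k *+ (k == d) = P@_d.
Proof. by rewrite sum_pred1 ?fset_uniq //; case: msuppP. Qed.

Lemma take_eqE (k w : word g) (i : nat) : (i <= size w)%N ->
  (k == take i w) = (i == size k) && (take (size k) w == k).
Proof.
move=> iw; apply/eqP/andP => [->|[/eqP -> /eqP //]].
by rewrite size_take_min (minn_idPl iw) eqxx.
Qed.

Lemma cat_eqE (k1 k2 w : word g) :
  (k1 ++ k2 == w) = (take (size k1) w == k1) && (k2 == drop (size k1) w).
Proof.
apply/eqP/andP => [<-|[/eqP e1 /eqP ->]]; first by rewrite take_size_cat // drop_size_cat.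
by rewrite -{1}e1 cat_take_drop.
Qed.

Lemma mcoeffM (P Q : alg) w :
  (P * Q)@_w = \sum_(i < (size w).+1) P@_(take i w) * Q@_(drop i w).
Proof.
rewrite mcoeffMl.
transitivity (\sum_(k1 <- msupp P)
    (P@_k1 * Q@_(drop (size k1) w)) *+ (take (size k1) w == k1)).
  apply: eq_bigr => k1 _.
  under eq_bigr => k2 _ do rewrite /= cat_eqE -mulnb mulnC mulrnA.
  rewrite sumrMnl; congr (_ *+ _).
  under eq_bigr do rewrite -mulrnAr.
  rewrite -mulr_sumr sum_pred1 ?fset_uniq //.
  by case: (boolP (_ \in msupp Q)) => // /mcoeff_outdom ->; rewrite mulr0.
symmetry.
under eq_bigr => i _ do rewrite -[P@_(take i w)](sum_msupp P) mulr_suml.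
rewrite exchange_big /=; apply: eq_bigr => k1 _.
under eq_bigr => i _ do rewrite mulrnAl.
rewrite -(big_mkord xpredT (fun i => (P@_k1 * Q@_(drop i w)) *+ (k1 == take i w))).
rewrite /index_iota subn0 (@eq_big_seq _ _ _ _ _ _ (fun i =>
  ((P@_k1 * Q@_(drop i w)) *+ (take (size k1) w == k1)) *+ (i == size k1))); last first.
  move=> i; rewrite mem_iota add0n ltnS => /= iw.
  by rewrite (take_eqE _ iw) -mulnb mulnC mulrnA.
rewrite sum_pred1 ?iota_uniq // mem_iota add0n ltnS.
case: (leqP (size k1) (size w)) => // sw; rewrite mulr0n.
case: eqP => // e; have := size_take_min (size k1) w; rewrite e => h.
by move: sw; rewrite [X in (_ < X)%N]h ltnNge geq_minr.
Qed.

Lemma pol_of_mul (P Q : alg) : pol_of (P * Q) = pmul (pol_of P) (pol_of Q).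
Proof. by apply: functional_extensionality => w; rewrite /pol_of mcoeffM. Qed.

Lemma pol_of_add (P Q : alg) : pol_of (P + Q) = padd (pol_of P) (pol_of Q).
Proof. by apply: functional_extensionality => w; rewrite /pol_of mcoeffD. Qed.

Lemma pol_of0 : pol_of 0 = @pzero g F.
Proof. by apply: functional_extensionality => w; rewrite /pol_of mcoeff0. Qed.

Definition mon (w : word g) : alg := << w >>.

Lemma mcoeff_mon w v : (mon w)@_v = (w == v)%:R.
Proof. by rewrite /mon mcoeffU. Qed.

Lemma mon_nil : mon [::] = 1.
Proof. by []. Qed.

Lemma mon_mul u v : mon u * mon v = mon (u ++ v).
Proof. by rewrite /mon malgM_def fgmulUU mulr1. Qed.

Lemma monZ c w : c *: mon w = << c *g w >>.
Proof.
apply/malgP => k; rewrite mcoeffZ mcoeff_mon mcoeffU.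
by case: eqP; rewrite ?mulr1 ?mulr0.
Qed.

Lemma malg_decomp (P : alg) : P = \sum_(k <- msupp P) P@_k *: mon k.
Proof. by rewrite {1}(monalgE P); apply: eq_bigr => k _; rewrite monZ. Qed.

Lemma scaleMl (c : F) (P : alg) : c *: P = << c *g ([::] : word g) >> * P.
Proof. by rewrite malgZ_def malgM_def fgmulUg. Qed.

Lemma scaleMr (c : F) (P : alg) : c *: P = P * << c *g ([::] : word g) >>.
Proof.
rewrite malgZ_def malgM_def fgmulgU; apply: eq_bigr => k _.
by rewrite mulrC mulm1.
Qed.

Lemma scalerAl_malg c (X Y : alg) : (c *: X) * Y = c *: (X * Y).
Proof. by rewrite !scaleMl mulrA. Qed.

Lemma scalerAr_malg c (X Y : alg) : X * (c *: Y) = c *: (X * Y).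
Proof. by rewrite !scaleMr mulrA. Qed.

Lemma catr_inj (k k0 d : word g) : k ++ d = k0 ++ d -> k = k0.
Proof.
move=> e; have sz : size k = size k0 by have := congr1 size e; rewrite !size_cat; lia.
by move/eqP: e; rewrite eqseq_cat // => /andP [/eqP].
Qed.

Lemma mon3E c (X : alg) d :
  mon c * X * mon d = \sum_(k <- msupp X) X@_k *: mon (c ++ k ++ d).
Proof.
rewrite {1}(monalgE X) mulr_sumr mulr_suml; apply: eq_bigr => k _.
by rewrite monZ /mon !malgM_def !fgmulUU mul1r mulr1 catA.
Qed.

Lemma mon3_coef c (X : alg) d k : (mon c * X * mon d)@_(c ++ k ++ d) = X@_k.
Proof.
rewrite mon3E raddf_sum /=.
under eq_bigr => k' _ do rewrite mcoeffZ mcoeff_mon.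
rewrite -[RHS](sum_msupp X k); apply: eq_bigr => k' _.
have -> : (c ++ k' ++ d == c ++ k ++ d) = (k' == k).
  apply/eqP/eqP => [e|->//]; apply: (@catr_inj _ _ d).
  by move/eqP: e; rewrite eqseq_cat // => /andP [_ /eqP].
by case: eqP; rewrite ?mulr1 ?mulr0.
Qed.

Lemma mon3_supp c (X : alg) d v : (mon c * X * mon d)@_v != 0 ->
  exists k, v = c ++ k ++ d /\ X@_k != 0.
Proof.
rewrite mon3E raddf_sum /= => /sum_neq0 [k _]; rewrite mcoeffZ mcoeff_mon.
have [<- h|_] := eqVneq (c ++ k ++ d) v; last by rewrite mulr0 eqxx.
by exists k; split => //; apply: contraNneq h => ->; rewrite mul0r.
Qed.

Lemma mulmon_supp (X : alg) d v : (X * mon d)@_v != 0 ->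
  exists k, v = k ++ d /\ X@_k != 0.
Proof.
move=> h; have := @mon3_supp [::] X d v; rewrite mon_nil mul1r => /(_ h) [k [e hk]].
by exists k.
Qed.

Definition supp_on (Pr : word g -> Prop) (P : alg) := forall w, P@_w != 0 -> Pr w.

Lemma supp_on0 Pr : supp_on Pr 0.
Proof. by move=> w; rewrite mcoeff0 eqxx. Qed.

Lemma supp_onD Pr P Q : supp_on Pr P -> supp_on Pr Q -> supp_on Pr (P + Q).
Proof.
move=> hP hQ w; rewrite mcoeffD => h.
have [p0|] := eqVneq (P@_w) 0; last exact: hP.
by apply: hQ; move: h; rewrite p0 add0r.
Qed.

Lemma supp_onZ Pr c P : supp_on Pr P -> supp_on Pr (c *: P).
Proof.
by move=> hP w; rewrite mcoeffZ => h; apply: hP; apply: contraNneq h => ->; rewrite mulr0.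
Qed.

Lemma supp_onN Pr P : supp_on Pr P -> supp_on Pr (- P).
Proof. by move=> h; rewrite -scaleN1r; apply: supp_onZ. Qed.

Lemma supp_onB Pr P Q : supp_on Pr P -> supp_on Pr Q -> supp_on Pr (P - Q).
Proof. by move=> hP hQ; apply: supp_onD => //; apply: supp_onN. Qed.

Lemma supp_on_sum Pr (I0 : eqType) (r : seq I0) (f : I0 -> alg) :
  (forall i, i \in r -> supp_on Pr (f i)) -> supp_on Pr (\sum_(i <- r) f i).
Proof.
elim: r => [|x r IH] h; first by rewrite big_nil; apply: supp_on0.
rewrite big_cons; apply: supp_onD; first by apply: h; rewrite mem_head.
by apply: IH => i ir; apply: h; rewrite in_cons ir orbT.
Qed.

Lemma supp_on_mon Pr w : Pr w -> supp_on Pr (mon w).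
Proof.
by move=> h v; rewrite mcoeff_mon; have [<-|_] := eqVneq w v; rewrite ?eqxx.
Qed.

Definition linext (h : word g -> alg) (P : alg) : alg :=
  \sum_(s <- msupp P) P@_s *: h s.

Lemma linext_incl h P (D : {fset word g}) : (msupp P `<=` D)%fset ->
  linext h P = \sum_(s <- D) P@_s *: h s.
Proof.
move=> sub; apply: big_fset_incl => // x _ xn.
by rewrite mcoeff_outdom // scale0r.
Qed.

Lemma linextD h P Q : linext h (P + Q) = linext h P + linext h Q.
Proof.
pose D := (msupp P `|` msupp Q)%fset.
rewrite (@linext_incl h (P + Q) D) ?msuppD_le // (@linext_incl h P D) ?fsubsetUl //.
rewrite (@linext_incl h Q D) ?fsubsetUr // -big_split.
by apply: eq_bigr => s _; rewrite mcoeffD scalerDl.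
Qed.

Lemma linextZ h c P : linext h (c *: P) = c *: linext h P.
Proof.
rewrite (@linext_incl h (c *: P) (msupp P)) ?msuppZ_le // /linext scaler_sumr.
by apply: eq_bigr => s _; rewrite mcoeffZ scalerA.
Qed.

Lemma linext0 h : linext h 0 = 0.
Proof. by rewrite /linext msupp0 big_seq_fset0. Qed.

Lemma linext_mon h w : linext h (mon w) = h w.
Proof. by rewrite /linext /mon msuppU1 big_seq_fset1 -/(mon w) mcoeff_mon eqxx scale1r. Qed.

Lemma linext_sum h (I0 : Type) (r : seq I0) (f : I0 -> alg) :
  linext h (\sum_(i <- r) f i) = \sum_(i <- r) linext h (f i).
Proof.
elim: r => [|x r IH]; first by rewrite !big_nil linext0.
by rewrite !big_cons linextD IH.
Qed.

End MonoidAlgebra.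
Arguments mon {g F} w.

Section Involution.
Variables (g : nat) (F : fieldType) (conj : {rmorphism F -> F}).
Hypothesis conj_inv : involutive conj.

Lemma wstarK : involutive (@wstar g).
Proof.
move=> w; rewrite /wstar map_rev revK -map_comp map_id_in // => l _ /=.
by rewrite negbK; case: l.
Qed.

Lemma size_wstar (w : word g) : size (wstar w) = size w.
Proof. by rewrite size_rev size_map. Qed.

Lemma take_wstar (w : word g) i : (i <= size w)%N ->
  wstar (take i w) = drop (size w - i) (wstar w).
Proof. by move=> iw; rewrite /wstar drop_rev size_map subKn // map_take. Qed.

Lemma drop_wstar (w : word g) i : (i <= size w)%N ->
  wstar (drop i w) = take (size w - i) (wstar w).
Proof. by move=> iw; rewrite /wstar take_rev size_map subKn // map_drop. Qed.

Lemma pstarK : involutive (@pstar g F conj).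
Proof.
by move=> p; apply: functional_extensionality => w; rewrite /pstar wstarK conj_inv.
Qed.

Lemma pstar_pmul (p q : pol g F) :
  pstar conj (pmul p q) = pmul (pstar conj q) (pstar conj p).
Proof.
apply: functional_extensionality => w; rewrite /pstar /pmul rmorph_sum /=.
rewrite size_wstar (reindex_inj rev_ord_inj) /=; apply: eq_bigr => i _.
have iw : (i <= size w)%N by rewrite -ltnS.
by rewrite rmorphM mulrC take_wstar ?leq_subr // drop_wstar ?leq_subr.
Qed.

Lemma pstar_padd (p q : pol g F) :
  pstar conj (padd p q) = padd (pstar conj p) (pstar conj q).
Proof. by apply: functional_extensionality => w; rewrite /pstar /padd rmorphD. Qed.

Lemma pstar0 : pstar conj (@pzero g F) = @pzero g F.
Proof. by apply: functional_extensionality => w; rewrite /pstar /pzero rmorph0. Qed.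

Lemma finsupp_pstar (p : pol g F) : finsupp p -> finsupp (pstar conj p).
Proof.
case=> s Hs; exists (map (@wstar g) s) => w; rewrite /pstar => h.
rewrite -[w]wstarK map_f // Hs //; by apply: contraNneq h => ->; rewrite rmorph0.
Qed.

Lemma star_ideal_finsupp : star_ideal conj (@finsupp g F).
Proof.
have fin_add (p q : pol g F) : finsupp p -> finsupp q -> finsupp (padd p q).
  by move=> /pol_of_surj [P <-] /pol_of_surj [Q <-]; rewrite -pol_of_add; exact: pol_of_finsupp.
have fin_mul (p q : pol g F) : finsupp p -> finsupp q -> finsupp (pmul p q).
  by move=> /pol_of_surj [P <-] /pol_of_surj [Q <-]; rewrite -pol_of_mul; exact: pol_of_finsupp.
split=> //; last exact: finsupp_pstar.
- by exists [::] => w; rewrite /pzero eqxx.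
- by move=> p q hp hq; split; apply: fin_mul.
Qed.

End Involution.

Section MonomialOrder.
Variables (g : nat) (lt : word g -> word g -> Prop).
Hypothesis Hlt : monomial_order lt.

Lemma lt_irr a : ~ lt a a. Proof. by case: Hlt => H _ _ _ _; exact: H. Qed.
Lemma lt_trans a b c : lt a b -> lt b c -> lt a c.
Proof. by case: Hlt => _ H _ _ _; exact: H. Qed.
Lemma lt_total a b : a <> b -> lt a b \/ lt b a.
Proof. by case: Hlt => _ _ H _ _; exact: H. Qed.
Lemma lt_wf : well_founded lt. Proof. by case: Hlt. Qed.
Lemma lt_asym a b : lt a b -> ~ lt b a.
Proof. by move=> h1 h2; apply: (@lt_irr a); apply: lt_trans h1 h2. Qed.

Lemma lt_cat3 a b c d : lt a b -> lt (c ++ a ++ d) (c ++ b ++ d).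
Proof.
case: Hlt => _ _ _ _ H h; have [_ hr] := H a b d h.
by have [hl _] := H _ _ c hr.
Qed.

(* The empty word is the least word: otherwise c^n would descend forever. *)
Lemma not_lt_nil c : ~ lt c [::].
Proof.
move=> h; pose f := fix f n := if n is n'.+1 then c ++ f n' else ([::] : word g).
have step n : lt (f n.+1) (f n) by exact: (lt_cat3 [::] (f n) h).
suff : forall x, Acc lt x -> forall n, x <> f n by move/(_ _ (lt_wf (f 0)) 0).
move=> x; elim => y _ IH n e; apply: (IH (f n.+1)) (erefl _); rewrite e; exact: step.
Qed.

Lemma nil_le c : c = [::] \/ lt [::] c.
Proof.
have [->|/eqP ne] := eqVneq c [::]; [by left|].
by case: (lt_total ne) => h; [case: (not_lt_nil h)|right].
Qed.

Lemma not_lt_ext c t d : ~ lt (c ++ t ++ d) t.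
Proof.
have le_c : t = c ++ t \/ lt t (c ++ t).
  by case: (nil_le c) => [->|hc]; [left|right; have := lt_cat3 [::] t hc].
have le_d : c ++ t = c ++ t ++ d \/ lt (c ++ t) (c ++ t ++ d).
  case: (nil_le d) => [->|hd]; first by left; rewrite cats0.
  by right; have := lt_cat3 (c ++ t) [::] hd; rewrite /= !cats0 catA.
move=> h; case: le_c => [e1|l1]; case: le_d => [e2|l2].
- by move: h; rewrite -e2 -e1; apply: lt_irr.
- by have := lt_trans l2 h; rewrite -e1; apply: lt_irr.
- by move: h; rewrite -e2; apply: lt_asym.
- by apply: (@lt_irr t); apply: lt_trans l1 (lt_trans l2 h).
Qed.

Lemma max_exists (s : seq (word g)) : s != [::] ->
  exists2 t, t \in s & forall w, w \in s -> w <> t -> lt w t.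
Proof.
elim: s => [|x s IH] //= _.
have [->|/IH [t ts Ht]] := eqVneq s [::].
  exists x; first by rewrite mem_seq1.
  by move=> w; rewrite mem_seq1 => /eqP.
have [ext|/eqP nxt] := eqVneq x t.
  exists t; first by rewrite in_cons ts orbT.
  by move=> w; rewrite in_cons => /orP [/eqP ->|/Ht]; rewrite ?ext.
case: (lt_total nxt) => hxt.
  exists t; first by rewrite in_cons ts orbT.
  by move=> w; rewrite in_cons => /orP [/eqP ->|/Ht].
exists x; first exact: mem_head.
move=> w; rewrite in_cons => /orP [/eqP -> //|ws] nwx.
have [-> //|/eqP nwt] := eqVneq w t; exact: lt_trans (Ht w ws nwt) hxt.
Qed.

Lemma lead_uniq (F : fieldType) (p : pol g F) t1 t2 :
  lead_mon lt p t1 -> lead_mon lt p t2 -> t1 = t2.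
Proof.
case=> h1 H1 [h2 H2]; have [//|/eqP ne] := eqVneq t1 t2.
by case: (lt_asym (H1 _ h2 (fun e => ne (esym e))) (H2 _ h1 ne)).
Qed.

Lemma lead_exists (F : fieldType) (P : {malg F[word g]}) : P != 0 ->
  exists t, lead_mon lt (pol_of P) t.
Proof.
rewrite -msupp_eq0 => /fset0Pn [k kin].
have : enum_fset (msupp P) != [::].
  by apply/eqP => e; move: kin; rewrite -[k \in msupp P]/(k \in enum_fset (msupp P)) e.
case/max_exists => t ts Ht; exists t; split; first by rewrite /pol_of mcoeff_neq0.
by move=> w; rewrite /pol_of mcoeff_neq0 => /Ht.
Qed.

End MonomialOrder.

Section Words.
Variable g : nat.

Lemma wdiv_refl (a : word g) : wdivides a a.
Proof. by exists [::], [::]; rewrite cats0. Qed.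

Lemma wdiv_trans (a b c : word g) : wdivides a b -> wdivides b c -> wdivides a c.
Proof. by case=> [x [y ->]] [u [v ->]]; exists (u ++ x), (y ++ v); rewrite !catA. Qed.

Lemma wdiv_prefix (u v : word g) : wdivides u (u ++ v).
Proof. by exists [::], v. Qed.

Lemma wdiv_suffix (u v : word g) : wdivides v (u ++ v).
Proof. by exists u, [::]; rewrite cats0. Qed.

Lemma wdiv_antisym (a b : word g) : wdivides a b -> wdivides b a -> a = b.
Proof.
move=> [x [y eb]] [u [v ea]]; have := congr1 size ea; rewrite eb !size_cat => h.
have /size0nil ex : size x = 0%N by lia.
have /size0nil ey : size y = 0%N by lia.
by rewrite ex ey cats0.
Qed.

Definition pure (b : bool) (w : word g) := all (fun l : letter g => l.2 == b) w.

Lemma pure_cat b u v : pure b (u ++ v) = pure b u && pure b v.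
Proof. exact: all_cat. Qed.

Lemma pure_falseE w : pure false w = all (fun l : letter g => ~~ l.2) w.
Proof. by apply: eq_all => l; rewrite /= eqbF_neg. Qed.

Lemma pure_true_wstar w : pure true (wstar w) = all (fun l : letter g => ~~ l.2) w.
Proof. by rewrite /pure /wstar all_rev all_map; apply: eq_all => l /=; rewrite eqb_id. Qed.

Lemma pure_both b w : pure b w -> pure (~~ b) w -> w = [::].
Proof. by case: w => //= l w /andP [/eqP <- _] /andP [/eqP]; case: (l.2). Qed.

Fixpoint pref b (s : word g) : word g :=
  if s is x :: t then if x.2 == b then x :: pref b t else [::] else [::].
Fixpoint post b (s : word g) : word g :=
  if s is x :: t then if x.2 == b then post b t else s else [::].
Definition headok b (s : word g) := if s is x :: _ then x.2 != b else true.

Lemma pref_post b s : pref b s ++ post b s = s.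
Proof. by elim: s => //= x t IH; case: ifP => //= _; rewrite IH. Qed.
Lemma pure_pref b s : pure b (pref b s).
Proof. by elim: s => //= x t IH; case: ifP => //= ->. Qed.
Lemma pure_cons_pref (l : letter g) s : pure l.2 (l :: pref l.2 s).
Proof. by rewrite /= eqxx pure_pref. Qed.
Lemma headok_post b s : headok b (post b s).
Proof. by elim: s => //= x t IH; case: ifP => //= ->. Qed.
Lemma pref_cat b v s : pure b v -> headok b s ->
  pref b (v ++ s) = v /\ post b (v ++ s) = s.
Proof.
elim: v => [|x v IH] /=; first by case: s => //= y t _ h; rewrite (negbTE h).
by case/andP => -> pv hs; case: (IH pv hs) => -> ->.
Qed.

(* A pure word dividing v s, with v b-pure and s not starting with flag b,
   divides v or s: it cannot straddle the flag change. *)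
Lemma split_div b b' v s u : pure b v -> headok b s -> pure b' u ->
  wdivides u (v ++ s) -> wdivides u v \/ wdivides u s.
Proof.
move=> pv hs pu [c [d e]].
have hd : drop (size c) (v ++ s) = u ++ d by rewrite e drop_size_cat.
case: (leqP (size v) (size c)) => hc.
  right; rewrite drop_cat ltnNge hc /= in hd.
  by exists (take (size c - size v) s), d; rewrite -hd cat_take_drop.
case: (leqP (size c + size u) (size v)) => hcu.
  left; have : take (size v) (v ++ s) = v by rewrite take_size_cat.
  rewrite e catA take_cat size_cat ltnNge hcu /= -catA => hv.
  by exists c, (take (size v - (size c + size u)) d).
exfalso; rewrite drop_cat hc in hd.
set v' := drop (size c) v in hd.
have sv' : size v' = (size v - size c)%N by rewrite size_drop.
have pv' : pure b v'.
  by move: pv; rewrite -[v in pure b v](cat_take_drop (size c)) pure_cat => /andP [].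
clearbody v'; clear e.
have ht : take (size u) (v' ++ s) = u by rewrite hd take_size_cat.
rewrite take_cat ltnNge (_ : (size v' <= size u)%N) /= in ht; last by rewrite sv'; lia.
have hk : (0 < size u - size v')%N by rewrite sv'; lia.
case: s hs hd ht => [|y t] hs hd ht.
  by move: (congr1 size hd); rewrite cats0 size_cat sv'; lia.
case: v' sv' pv' hd ht hk => [|x v''] sv' pv' hd ht hk; first by move: sv'; simpl; lia.
move: pu; rewrite -ht; case: (size u - _)%N hk => // k _ /=.
case/andP => /eqP xb; move: pv' => /= /andP [/eqP xb'] _.
rewrite pure_cat => /andP [_] /= /andP [/eqP yb _].
by move: hs => /=; rewrite yb -xb xb' eqxx.
Qed.

End Words.

Section StarIdeal.
Variables (g : nat) (F : fieldType) (conj : {rmorphism F -> F}).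
Hypothesis conj_inv : involutive conj.
Variable (lt : word g -> word g -> Prop).
Hypothesis Hlt : monomial_order lt.
Variable (A : pol g F -> Prop).
Hypothesis HA : forall a, A a -> [/\ finsupp a, a <> @pzero g F & analytic a].

Notation alg := {malg F[word g]}.
Notation I := (star_ideal_gen conj A).

Lemma I_A a : A a -> I a.
Proof. by move=> Aa S _ HS; apply: HS. Qed.

Lemma I_finsupp p : I p -> finsupp p.
Proof. by move=> Ip; apply: Ip; [exact: star_ideal_finsupp|move=> a /HA []]. Qed.

Lemma I_star_ideal : star_ideal conj I.
Proof.
split.
- exact: I_finsupp.
- by move=> S [].
- by move=> p q Ip Iq S HS HA'; case: (HS) => _ _ H _ _; apply: H; [apply: Ip|apply: Iq].
- move=> p q Ip fq; split=> S HS HA'; case: (HS) => _ _ _ H _;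
    by case: (H p q (Ip S HS HA') fq).
- by move=> p Ip S HS HA'; case: (HS) => _ _ _ _ H; apply: H; apply: Ip.
Qed.

Definition inI (P : alg) := I (pol_of P).

Lemma inI0 : inI 0.
Proof. by rewrite /inI pol_of0; case: I_star_ideal. Qed.
Lemma inID P Q : inI P -> inI Q -> inI (P + Q).
Proof. by rewrite /inI pol_of_add; case: I_star_ideal => _ _ H _ _; apply: H. Qed.
Lemma inIMl Q P : inI P -> inI (Q * P).
Proof.
rewrite /inI pol_of_mul; case: I_star_ideal => _ _ _ H _ HP.
by case: (H _ _ HP (pol_of_finsupp Q)).
Qed.
Lemma inIMr Q P : inI P -> inI (P * Q).
Proof.
rewrite /inI pol_of_mul; case: I_star_ideal => _ _ _ H _ HP.
by case: (H _ _ HP (pol_of_finsupp Q)).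
Qed.
Lemma inIZ c P : inI P -> inI (c *: P).
Proof. by rewrite scaleMl; apply: inIMl. Qed.
Lemma inIB P Q : inI P -> inI Q -> inI (P - Q).
Proof. by move=> hP hQ; apply: inID => //; rewrite -scaleN1r; apply: inIZ. Qed.

Definition pure_poly b : alg -> Prop := supp_on (pure b).

Lemma pure_polyM b (X Y : alg) : pure_poly b X -> pure_poly b Y -> pure_poly b (X * Y).
Proof.
move=> hX hY w; rewrite mcoeffM => /sum_neq0 [i _ h].
rewrite -(cat_take_drop i w) pure_cat hX ?hY //;
  by apply: contraNneq h => ->; rewrite ?mulr0 ?mul0r.
Qed.

Definition pure_lead (u : word g) :=
  exists h : alg, [/\ inI h, h != 0, pure_poly false h \/ pure_poly true h
                    & lead_mon lt (pol_of h) u].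

Definition standard (w : word g) := forall u, pure_lead u -> ~ wdivides u w.
Definition standard_poly : alg -> Prop := supp_on standard.

Lemma standard_div v w : standard w -> wdivides v w -> standard v.
Proof. by move=> hw hvw u Lu huv; apply: (hw u Lu); apply: wdiv_trans huv hvw. Qed.

Lemma standard_nil w : standard w -> standard [::].
Proof. by move=> hw; apply: standard_div hw _; exists [::], w. Qed.

Lemma pure_lead_pure u : pure_lead u -> exists b, pure b u.
Proof. by case=> h [_ _ [] hp [hu _]]; [exists false|exists true]; apply: hp. Qed.

Lemma standard_cat b v s : pure b v -> headok b s -> standard v -> standard s ->
  standard (v ++ s).
Proof.
move=> pv hs sv ss u Lu du; have [b' pu] := pure_lead_pure Lu.
by case: (split_div pv hs pu du); [apply: sv|apply: ss].
Qed.

(* A pure standard element of I is zero: otherwise its leading word would be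
   a pure leading word dividing itself. *)
Lemma inI_standard0 b (X : alg) : inI X -> pure_poly b X -> standard_poly X -> X = 0.
Proof.
move=> hI hp hs; apply/eqP; apply: contraT => nz.
have [u lu] := lead_exists Hlt nz.
have Lu : pure_lead u by exists X; split => //; case: b hp => hp; [right|left].
by case: (hs u (proj1 lu) u Lu (wdiv_refl u)).
Qed.

(* A b'-pure polynomial whose leading word is b-pure is b-pure: two flags
   can only meet in the empty word, which is the least word. *)
Lemma pure_poly_lead b b' (h : alg) u : pure_poly b' h -> lead_mon lt (pol_of h) u ->
  pure b u -> pure_poly b h.
Proof.
move=> hp [hu Hu] pu; have [<-//|nbb] := eqVneq b' b.
have u0 : u = [::].
  apply: (@pure_both _ b) => //; have -> : ~~ b = b' by case: b b' nbb {hp pu} => [] [].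
  exact: hp.
move=> v hv; have [-> //|/eqP nv] := eqVneq v u.
by have := Hu v hv nv; rewrite u0 => /(not_lt_nil Hlt).
Qed.

Definition reduces b (X : alg) :=
  exists R, [/\ pure_poly b R, standard_poly R & inI (X - R)].

Lemma reduces_inI b X : inI X -> reduces b X.
Proof. by move=> h; exists 0; split; rewrite ?subr0 //; apply: supp_on0. Qed.

Lemma reducesD b X Y : reduces b X -> reduces b Y -> reduces b (X + Y).
Proof.
case=> R1 [p1 s1 i1] [R2 [p2 s2 i2]]; exists (R1 + R2); split; try exact: supp_onD.
by rewrite opprD addrACA; apply: inID.
Qed.

Lemma reducesZ b c X : reduces b X -> reduces b (c *: X).
Proof.
case=> R [p s i]; exists (c *: R); split; try exact: supp_onZ.
by rewrite -scalerBr; apply: inIZ.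
Qed.

Lemma reduces_sum b (I0 : eqType) (r : seq I0) (f : I0 -> alg) :
  (forall i, i \in r -> reduces b (f i)) -> reduces b (\sum_(i <- r) f i).
Proof.
elim: r => [|x r IH] h; first by rewrite big_nil; apply: reduces_inI; apply: inI0.
rewrite big_cons; apply: reducesD; first by apply: h; rewrite mem_head.
by apply: IH => i ir; apply: h; rewrite in_cons ir orbT.
Qed.

Lemma reduces_lin b (X : alg) :
  (forall v, X@_v != 0 -> reduces b (mon v)) -> reduces b X.
Proof.
move=> h; rewrite (malg_decomp X); apply: reduces_sum => v vin; apply: reducesZ.
by apply: h; rewrite -mcoeff_neq0 in vin.
Qed.

(* Division algorithm: a b-pure word w is standard, or is divisible by a pure
   leading word u = T(h), w = c u d; then w - c h d / lc(h) is a combination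
   of b-pure words smaller than w, and we conclude by well-founded induction. *)
Lemma reduces_mon b w : pure b w -> reduces b (mon w).
Proof.
elim/(well_founded_ind (lt_wf Hlt)): w => w IH pw.
case: (classic (standard w)) => hstd.
  exists (mon w); split; try exact: supp_on_mon.
  by rewrite subrr; apply: inI0.
have [u [Lu [c [d ew]]]] : exists u, pure_lead u /\ wdivides u w.
  by apply: NNPP => H; apply: hstd => u Lu duw; apply: H; exists u.
case: Lu => h [hI _ hpure hlead].
have /and3P [pc pu pd] : [&& pure b c, pure b u & pure b d] by rewrite -!pure_cat -ew.
have hb : pure_poly b h by case: hpure => hp; exact: pure_poly_lead hp hlead pu.
have lcnz : h@_u != 0 := proj1 hlead.
pose Q := mon c * ((h@_u)^-1 *: h) * mon d.
have QI : inI Q by apply: inIMr; apply: inIMl; apply: inIZ.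
have smaller : supp_on (fun v => lt v w /\ pure b v) (mon w - Q).
  move=> v; rewrite mcoeffB mcoeff_mon.
  have [<-|nwv] := eqVneq w v.
    by rewrite /Q ew mon3_coef mcoeffZ mulVf // subrr eqxx.
  rewrite sub0r oppr_eq0 => /mon3_supp [k [ev]]; rewrite mcoeffZ => hk.
  have hk' : h@_k != 0 by apply: contraNneq hk => ->; rewrite mulr0.
  have nku : k <> u by move=> e; move: nwv; rewrite ev ew e eqxx.
  split; first by rewrite ev ew; apply: lt_cat3 => //; exact: (proj2 hlead).
  by rewrite ev !pure_cat pc pd hb.
have -> : mon w = Q + (mon w - Q) by rewrite addrC subrK.
apply: reducesD; first exact: reduces_inI.
by apply: reduces_lin => v /smaller [lvw pv]; apply: IH.
Qed.

Lemma reduces_pure b P : pure_poly b P -> reduces b P.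
Proof. by move=> hp; apply: reduces_lin => v /hp; apply: reduces_mon. Qed.

(* The b-normal form of a b-pure polynomial: the b-pure standard polynomial
   congruent to it modulo I (exists by division, unique by [inI_standard0]). *)
Definition nf b (P : alg) : alg :=
  epsilon (inhabits 0) (fun R => [/\ pure_poly b R, standard_poly R & inI (P - R)]).

Lemma nf_spec b P : pure_poly b P ->
  [/\ pure_poly b (nf b P), standard_poly (nf b P) & inI (P - nf b P)].
Proof.
move=> hp; apply: (@epsilon_spec alg (inhabits 0)
  (fun R => [/\ pure_poly b R, standard_poly R & inI (P - R)])).
by case: (reduces_pure hp) => R HR; exists R.
Qed.

Lemma nf_eq b P R : pure_poly b P -> pure_poly b R -> standard_poly R -> inI (P - R) ->
  nf b P = R.
Proof.
move=> hp pR sR iR; case: (nf_spec hp) => pN sN iN.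
apply/eqP; rewrite -subr_eq0; apply/eqP; apply: (@inI_standard0 b).
- have -> : nf b P - R = (P - R) - (P - nf b P) by rewrite opprB [RHS]addrC addrA subrK.
  exact: inIB.
- exact: supp_onB.
- exact: supp_onB.
Qed.

Lemma nf_inI b P : pure_poly b P -> inI P -> nf b P = 0.
Proof. by move=> hP hI; apply: nf_eq; rewrite ?subr0 //; apply: supp_on0. Qed.

Lemma nf_id b P : pure_poly b P -> standard_poly P -> nf b P = P.
Proof. by move=> hP hs; apply: nf_eq => //; rewrite subrr; apply: inI0. Qed.

Lemma nfD b P Q : pure_poly b P -> pure_poly b Q -> nf b (P + Q) = nf b P + nf b Q.
Proof.
move=> hP hQ; case: (nf_spec hP) => p1 s1 i1; case: (nf_spec hQ) => p2 s2 i2.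
apply: nf_eq; try exact: supp_onD.
by rewrite opprD addrACA; apply: inID.
Qed.

Lemma nfZ b c P : pure_poly b P -> nf b (c *: P) = c *: nf b P.
Proof.
move=> hP; case: (nf_spec hP) => p1 s1 i1.
apply: nf_eq; try exact: supp_onZ.
by rewrite -scalerBr; apply: inIZ.
Qed.

Lemma nf_sum b (I0 : eqType) (r : seq I0) (f : I0 -> alg) :
  (forall i, i \in r -> pure_poly b (f i)) ->
  nf b (\sum_(i <- r) f i) = \sum_(i <- r) nf b (f i).
Proof.
elim: r => [|x r IH] h.
  by rewrite !big_nil nf_inI //; [apply: supp_on0|apply: inI0].
have h' i : i \in r -> pure_poly b (f i) by move=> ir; apply: h; rewrite in_cons ir orbT.
rewrite !big_cons nfD ?IH //; first by apply: h; rewrite mem_head.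
exact: supp_on_sum.
Qed.

Lemma nf_mull b X P : pure_poly b X -> pure_poly b P -> nf b (X * P) = nf b (X * nf b P).
Proof.
move=> hX hP; case: (nf_spec hP) => p1 s1 i1.
have hXN : pure_poly b (X * nf b P) by apply: pure_polyM.
case: (nf_spec hXN) => p2 s2 i2.
apply: nf_eq; [exact: pure_polyM|exact: p2|exact: s2|].
have -> : X * P - nf b (X * nf b P) =
    X * (P - nf b P) + (X * nf b P - nf b (X * nf b P)) by rewrite mulrBr addrA subrK.
by apply: inID => //; apply: inIMl.
Qed.

(* The left action of F<x,x*> on standard polynomials.  A letter l with flag b
   acts on a standard word s = pref_b(s) post_b(s) by reducing l pref_b(s). *)
Definition act_letter (l : letter g) (s : word g) : alg :=
  nf l.2 (mon (l :: pref l.2 s)) * mon (post l.2 s).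

Fixpoint act_word (w : word g) (P : alg) : alg :=
  if w is l :: w' then linext (act_letter l) (act_word w' P) else P.

Definition act (f P : alg) : alg := linext (fun w => act_word w P) f.

Lemma act_wordD w P Q : act_word w (P + Q) = act_word w P + act_word w Q.
Proof. by elim: w => //= l w ->; rewrite linextD. Qed.
Lemma act_wordZ w c P : act_word w (c *: P) = c *: act_word w P.
Proof. by elim: w => //= l w ->; rewrite linextZ. Qed.
Lemma act_word0 w : act_word w 0 = 0.
Proof. by elim: w => //= l w ->; rewrite linext0. Qed.
Lemma act_word_sum w (I0 : Type) (r : seq I0) (f : I0 -> alg) :
  act_word w (\sum_(i <- r) f i) = \sum_(i <- r) act_word w (f i).
Proof.
elim: r => [|x r IH]; first by rewrite !big_nil act_word0.
by rewrite !big_cons act_wordD IH.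
Qed.
Lemma act_word_cat u v P : act_word (u ++ v) P = act_word u (act_word v P).
Proof. by elim: u => //= l u ->. Qed.

Lemma actD f P Q : act f (P + Q) = act f P + act f Q.
Proof.
by rewrite /act /linext -big_split; apply: eq_bigr => w _; rewrite act_wordD scalerDr.
Qed.
Lemma actZ f c P : act f (c *: P) = c *: act f P.
Proof.
rewrite /act /linext scaler_sumr; apply: eq_bigr => w _.
by rewrite act_wordZ !scalerA mulrC.
Qed.
Lemma act0 f : act f 0 = 0.
Proof. by rewrite /act /linext big1 // => w _; rewrite act_word0 scaler0. Qed.
Lemma act_sum f (I0 : Type) (r : seq I0) (h : I0 -> alg) :
  act f (\sum_(i <- r) h i) = \sum_(i <- r) act f (h i).
Proof.
elim: r => [|x r IH]; first by rewrite !big_nil act0.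
by rewrite !big_cons actD IH.
Qed.
Lemma actDl f1 f2 P : act (f1 + f2) P = act f1 P + act f2 P.
Proof. exact: linextD. Qed.
Lemma act0l P : act 0 P = 0.
Proof. exact: linext0. Qed.

Lemma act_mul f q P : act (f * q) P = act f (act q P).
Proof.
rewrite malgME /act linext_sum [RHS]/linext; apply: eq_bigr => k1 _.
rewrite linext_sum [X in _ = _ *: act_word _ X]/linext act_word_sum scaler_sumr.
apply: eq_bigr => k2 _.
by rewrite -monZ linextZ linext_mon act_wordZ act_word_cat scalerA.
Qed.

Lemma act_letter_standard l s : standard s -> standard_poly (act_letter l s).
Proof.
move=> hs v /mulmon_supp [k [-> hk]].
have hp : pure_poly l.2 (mon (l :: pref l.2 s)) by apply: supp_on_mon; apply: pure_cons_pref.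
case: (nf_spec hp) => pN sN _.
apply: (@standard_cat l.2); [exact: pN | exact: headok_post | exact: sN | ].
by apply: standard_div hs _; rewrite -{2}(pref_post l.2 s); exact: wdiv_suffix.
Qed.

Lemma act_word_standard w P : standard_poly P -> standard_poly (act_word w P).
Proof.
elim: w => //= l w IH hP; apply: supp_on_sum => s sin.
by apply: supp_onZ; apply: act_letter_standard; apply: (IH hP); rewrite mcoeff_neq0.
Qed.

Lemma act_standard f P : standard_poly P -> standard_poly (act f P).
Proof.
move=> hP; apply: supp_on_sum => w _; apply: supp_onZ; exact: act_word_standard.
Qed.

Lemma act_word_nil w : standard w -> act_word w (mon [::]) = mon w.
Proof.
elim: w => [|l w IH] //= hs.
rewrite IH; last by apply: standard_div hs _; rewrite -cat1s; apply: wdiv_suffix.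
rewrite linext_mon /act_letter nf_id.
- by rewrite mon_mul cat_cons pref_post.
- by apply: supp_on_mon; apply: pure_cons_pref.
- apply: supp_on_mon; apply: standard_div hs _.
  by rewrite -{2}(pref_post l.2 w) -cat_cons; apply: wdiv_prefix.
Qed.

Lemma act_nil f : standard_poly f -> act f (mon [::]) = f.
Proof.
move=> hf; rewrite /act /linext [RHS](malg_decomp f); apply: eq_big_seq => w win.
by rewrite act_word_nil; last by apply: hf; rewrite mcoeff_neq0.
Qed.

(* A b-pure word w acts on a standard word s through the b-normal form of
   w pref_b(s): the letters of w all feed into the same pure prefix. *)
Lemma act_word_pure b w s : pure b w -> standard s ->
  act_word w (mon s) = nf b (mon (w ++ pref b s)) * mon (post b s).
Proof.
elim: w => [|l w IH] /= pw hs.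
  rewrite nf_id; [by rewrite mon_mul pref_post|by apply: supp_on_mon; apply: pure_pref|].
  by apply: supp_on_mon; apply: standard_div hs _; rewrite -{2}(pref_post b s); apply: wdiv_prefix.
case/andP: pw => /eqP lb pw; rewrite (IH pw hs).
set s1 := pref b s; set s2 := post b s.
have hp1 : pure_poly b (mon (w ++ s1)) by apply: supp_on_mon; rewrite pure_cat pw pure_pref.
case: (nf_spec hp1); set N := nf b (mon (w ++ s1)) => pN sN _.
have pNv v : v \in msupp N -> pure b v by rewrite -mcoeff_neq0; apply: pN.
have plv v : v \in msupp N -> pure_poly b (mon (l :: v)).
  by move=> /pNv pv; apply: supp_on_mon; rewrite /= lb eqxx pv.
have -> : linext (act_letter l) (N * mon s2) =
    \sum_(v <- msupp N) N@_v *: (nf b (mon (l :: v)) * mon s2).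
  rewrite {1}(malg_decomp N) mulr_suml linext_sum; apply: eq_big_seq => v vin.
  have [e2 e3] := pref_cat (pNv v vin) (headok_post b s).
  rewrite scalerAl_malg mon_mul linextZ linext_mon.
  by rewrite /act_letter lb e2 e3.
transitivity (nf b (mon [:: l] * N) * mon s2).
  rewrite [in RHS](malg_decomp N) mulr_sumr.
  under [in RHS]eq_bigr do rewrite scalerAr_malg mon_mul.
  rewrite nf_sum; last by move=> v vin; apply: supp_onZ; apply: plv.
  rewrite mulr_suml; apply: eq_big_seq => v vin.
  by rewrite nfZ ?scalerAl_malg //; apply: plv.
by rewrite -nf_mull ?mon_mul //; apply: supp_on_mon; rewrite /= lb eqxx.
Qed.

(* Hence a pure element f of I annihilates every standard word s:
   f.s = nf(f pref(s)) post(s) and f pref(s) lies in I. *)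
Lemma act_pure_inI b f s : pure_poly b f -> inI f -> standard s -> act f (mon s) = 0.
Proof.
move=> pf If hs; rewrite /act /linext.
have pfw w : w \in msupp f -> pure b w by rewrite -mcoeff_neq0; apply: pf.
have pws w : w \in msupp f -> pure_poly b (mon (w ++ pref b s)).
  by move=> /pfw pw; apply: supp_on_mon; rewrite pure_cat pure_pref pw.
suff -> : \sum_(w <- msupp f) f@_w *: act_word w (mon s) =
    nf b (f * mon (pref b s)) * mon (post b s).
  rewrite nf_inI ?mul0r //; last exact: inIMr.
  by apply: pure_polyM => //; apply: supp_on_mon; apply: pure_pref.
rewrite [in RHS](malg_decomp f) mulr_suml.
under [in RHS]eq_bigr do rewrite scalerAl_malg mon_mul.
rewrite nf_sum; last by move=> w /pws pw; apply: supp_onZ.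
rewrite mulr_suml; apply: eq_big_seq => w win.
by rewrite nfZ ?scalerAl_malg ?(act_word_pure (pfw _ win) hs) //; apply: pws.
Qed.

Definition annihilates (P : alg) := forall Q, standard_poly Q -> act P Q = 0.

Lemma annihilates_words P : (forall s, standard s -> act P (mon s) = 0) -> annihilates P.
Proof.
move=> h Q hQ; rewrite (malg_decomp Q) act_sum big1_seq // => s sin.
by rewrite actZ h ?scaler0 //; apply: hQ; rewrite mcoeff_neq0.
Qed.

(* The annihilator is a two-sided ideal: the action is a module action
   that preserves standard polynomials. *)
Lemma annihilatesD P Q : annihilates P -> annihilates Q -> annihilates (P + Q).
Proof. by move=> hP hQ S hS; rewrite actDl hP // hQ // addr0. Qed.

Lemma annihilatesMl Q P : annihilates P -> annihilates (Q * P).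
Proof. by move=> hP S hS; rewrite act_mul hP // act0. Qed.

Lemma annihilatesMr Q P : annihilates P -> annihilates (P * Q).
Proof. by move=> hP S hS; rewrite act_mul hP //; apply: act_standard. Qed.

Definition annihilating (p : pol g F) :=
  finsupp p /\ forall P, pol_of P = p -> annihilates P.
Definition star_annihilating (p : pol g F) :=
  annihilating p /\ annihilating (pstar conj p).

Lemma annihilating_add p q : annihilating p -> annihilating q -> annihilating (padd p q).
Proof.
case=> /pol_of_surj [P eP] hp [/pol_of_surj [Q eQ] hq].
split; first by rewrite -eP -eQ -pol_of_add; apply: pol_of_finsupp.
by move=> R; rewrite -eP -eQ -pol_of_add => /pol_of_inj ->; apply: annihilatesD; auto.
Qed.

Lemma annihilating_mul p q : finsupp q ->
  (annihilating p -> annihilating (pmul q p)) /\ (annihilating p -> annihilating (pmul p q)).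
Proof.
move=> /pol_of_surj [Q <-]; split=> -[/pol_of_surj [P eP] hp].
  split; first by rewrite -eP -pol_of_mul; apply: pol_of_finsupp.
  by move=> R; rewrite -eP -pol_of_mul => /pol_of_inj ->; apply: annihilatesMl; auto.
split; first by rewrite -eP -pol_of_mul; apply: pol_of_finsupp.
by move=> R; rewrite -eP -pol_of_mul => /pol_of_inj ->; apply: annihilatesMr; auto.
Qed.

Lemma star_annihilating_ideal : star_ideal conj star_annihilating.
Proof.
have ann0 : annihilating (@pzero g F).
  split; first by case: (@star_ideal_finsupp g F conj).
  by move=> P; rewrite -pol_of0 => /pol_of_inj -> Q _; apply: act0l.
split.
- by move=> p [[]].
- by split; rewrite ?pstar0.
- by move=> p q [hp hp'] [hq hq']; split; rewrite ?pstar_padd; apply: annihilating_add.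
- move=> p q [hp hp'] fq; have fq' := finsupp_pstar conj fq.
  have [Ml Mr] := annihilating_mul p fq; have [Ml' Mr'] := annihilating_mul (pstar conj p) fq'.
  by split; split; rewrite ?pstar_pmul; auto.
- by move=> p [hp hp']; split; rewrite ?pstarK.
Qed.

(* The generators are analytic, so they and their adjoints are pure elements
   of I and annihilate the standard module. *)
Lemma generator_star_annihilating a : A a -> star_annihilating a.
Proof.
move=> Aa; have [fa _ an] := HA Aa.
have ann b (p : pol g F) : I p -> (forall w, p w != 0 -> pure b w) -> annihilating p.
  move=> Ip pp; split; first exact: I_finsupp.
  move=> P eP; apply: annihilates_words => s hs; apply: (@act_pure_inI b) => //.
  - by move=> w; rewrite -[P@_w]/(pol_of P w) eP; apply: pp.
  - by rewrite /inI eP.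
split; [apply: (ann false)|apply: (ann true)].
- exact: I_A.
- by move=> w /an; rewrite pure_falseE.
- by case: I_star_ideal => _ _ _ _; apply; apply: I_A.
- move=> w; rewrite /pstar => h.
  rewrite -[w]wstarK pure_true_wstar; apply: an.
  by apply: contraNneq h => ->; rewrite rmorph0.
Qed.

Lemma inI_annihilates P : inI P -> annihilates P.
Proof.
move=> IP; have [[_ hP] _] : star_annihilating (pol_of P).
  by apply: IP; [exact: star_annihilating_ideal|exact: generator_star_annihilating].
exact: hP.
Qed.

Variable B : pol g F -> Prop.
Hypothesis HB : reduced_groebner lt I B.

Lemma basis_inI b : B b -> exists P, pol_of P = b /\ inI P.
Proof.
case: HB => HBI _ _ _ Bb; have [P eP] := pol_of_surj (I_finsupp (HBI b Bb)).
by exists P; rewrite /inI eP; split => //; apply: HBI.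
Qed.

Lemma basis_divides_pure_lead u : pure_lead u ->
  exists b tb, [/\ B b, lead_mon lt b tb & wdivides tb u].
Proof.
case: HB => _ HBG _ _ [h [hI hnz _ hl]].
have nz : pol_of h <> @pzero g F by rewrite -pol_of0 => /pol_of_inj /eqP; apply/negP.
have [b [Bb [tb [tf [l1 l2 d]]]]] := HBG (pol_of h) hI nz.
by exists b, tb; split => //; rewrite (lead_uniq Hlt hl l2).
Qed.

Section BasisElement.
Variables (b0 : pol g F) (t : word g).
Hypotheses (Bb0 : B b0) (lead_b0 : lead_mon lt b0 t).

Lemma basis_unique_divisor b tb w : B b -> lead_mon lt b tb -> b0 w != 0 ->
  wdivides tb w -> b = b0.
Proof.
move=> Bb lb b0w dw; apply: NNPP => neb.
by case: HB => _ _ _ Hred; apply: (Hred b b0 Bb Bb0 neb tb lb w b0w).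
Qed.

(* The non-leading words of a basis element are standard: by reducedness
   only b0 could have a leading word dividing them, and T(b0) is too large. *)
Lemma basis_tail_standard w : b0 w != 0 -> w <> t -> standard w.
Proof.
move=> hw nwt u Lu du.
have [b [tb [Bb lb dtb]]] := basis_divides_pure_lead Lu.
have eb := basis_unique_divisor Bb lb hw (wdiv_trans dtb du).
subst b; rewrite (lead_uniq Hlt lb lead_b0) in dtb.
have [c [d ew]] := wdiv_trans dtb du.
by have := proj2 lead_b0 w hw nwt; rewrite ew; apply: not_lt_ext.
Qed.

Lemma basis_lead_pure_lead : pure_lead t.
Proof.
have [P [eP PI]] := basis_inI Bb0.
have nstd : ~ standard t.
  move=> st; have sP : standard_poly P.
    move=> w; rewrite -[P@_w]/(pol_of P w) eP => hw.
    have [-> //|/eqP nwt] := eqVneq w t; exact: basis_tail_standard hw nwt.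
  have := inI_annihilates PI (supp_on_mon (standard_nil st)).
  rewrite act_nil // => P0; move: (proj1 lead_b0).
  by rewrite -eP P0 /pol_of mcoeff0 eqxx.
have [u [Lu du]] : exists u, pure_lead u /\ wdivides u t.
  by apply: NNPP => H; apply: nstd => u Lu dut; apply: H; exists u.
have [b [tb [Bb lb dtb]]] := basis_divides_pure_lead Lu.
have eb := basis_unique_divisor Bb lb (proj1 lead_b0) (wdiv_trans dtb du).
subst b; rewrite (lead_uniq Hlt lb lead_b0) in dtb.
by rewrite (wdiv_antisym dtb du).
Qed.

(* Main step: b0 is pure.  With T(b0) = t of flag b and P = t + tail,
   acting on the empty word gives nf_b(t) + tail = 0 as b0 is in I,
   so the tail is b-pure. *)
Lemma basis_element_pure : exists b, forall w, b0 w != 0 -> pure b w.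
Proof.
have [P [eP PI]] := basis_inI Bb0.
have [t' [lt' bt1]] : monic lt b0 by case: HB => _ _ Hm _; apply: Hm.
rewrite -(lead_uniq Hlt lead_b0 lt') in bt1.
have [b pt] := pure_lead_pure basis_lead_pure_lead.
exists b => w hw; have [-> //|/eqP nwt] := eqVneq w t.
have snil := standard_nil (basis_tail_standard hw nwt).
pose tail := P - mon t.
have stail : standard_poly tail.
  move=> v; rewrite mcoeffB mcoeff_mon -[P@_v]/(pol_of P v) eP.
  have [<-|/eqP ntv] := eqVneq t v; first by rewrite bt1 subrr eqxx.
  by rewrite subr0 => hv; apply: (basis_tail_standard hv); apply: nesym.
have := inI_annihilates PI (supp_on_mon snil).
rewrite -(subrK (mon t) P) -/tail actDl (act_nil stail) /act linext_mon.
rewrite (act_word_pure pt snil) /= cats0 mulr1 => e0.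
have ptail : pure_poly b tail.
  have -> : tail = - nf b (mon t) by apply/eqP; rewrite -addr_eq0 e0.
  by apply: supp_onN; case: (@nf_spec b (mon t) (supp_on_mon pt)).
apply: ptail; rewrite mcoeffB mcoeff_mon -[P@_w]/(pol_of P w) eP.
have /negbTE -> : t != w by apply/eqP => /esym; apply: nwt.
by rewrite subr0.
Qed.

End BasisElement.

End StarIdeal.

(* Proposition 4.1: G collects the analytic basis elements and H the
   adjoints of the others, which are pure-star by [basis_element_pure]. *)
Theorem proposition4p1 (g : nat) (F : fieldType) (conj : {rmorphism F -> F})
    (conj_inv : involutive conj)
    (lt : word g -> word g -> Prop) (Hlt : monomial_order lt)
    (A : pol g F -> Prop)
    (HA : forall a, A a -> [/\ finsupp a, a <> @pzero g F & analytic a])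
    (B : pol g F -> Prop)
    (HB : @reduced_groebner g F lt (@star_ideal_gen g F conj A) B) :
  exists G H : pol g F -> Prop,
    [/\ (forall p, G p -> analytic p),
        (forall p, H p -> analytic p) &
        (forall p, B p <-> (G p \/ exists h, H h /\ p = @pstar g F conj h))].
Proof.
exists (fun p => B p /\ analytic p), (fun h => analytic h /\ B (pstar conj h)).
split=> [p []|p []|p] //; split=> [Bp|[[Bp _]|[h [[_ Bh] ->]]] //].
have [t [lead_p _]] : monic lt p by case: HB => _ _ Hm _; apply: Hm.
have [[] pure_p] := basis_element_pure conj_inv Hlt HA HB Bp lead_p.
- right; exists (pstar conj p); rewrite pstarK //; split=> //; split=> // w hw.
  rewrite -pure_true_wstar; apply: pure_p.
  by apply: contraNneq hw => p0; rewrite /pstar p0 rmorph0.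
- by left; split=> // w /pure_p; rewrite pure_falseE.
Qed.
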